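(* Let $U\in\mathcal{B}(\ell^2(\mathbb{N}))$ with $\|U\|\le1$. Let $\Omega=\Omega_1\cup\dots\cup\Omega_r$ be an $(\mathbf{N},\mathbf{m})$-multilevel Bernoulli sampling scheme with $1\le N_1<\dots<N_r$, let $M_1<\dots<M_r$, $\mathbf{s}\in\mathbb{N}^r$, $\Delta=\cup_k\Delta_k$ with $\Delta_k\subseteq\{M_{k-1}+1,\dots,M_k\}$, $|\Delta_k|=s_k$, let $q_k=m_k/(N_k-N_{k-1})$, $D=\sum_kq_k^{-1}P_{\Omega_k}$, and let $M\ge M_r$ be an integer. Then for any $t\in(0,1)$ and $\gamma\in(0,1)$, $$\mathbb{P}\Big(\max_{i\in\{1,\dots,M\}\cap\Delta^c}\|P_{\{i\}}U^*DUP_{\{i\}}\|\ge1+t\Big)\le\gamma$$ provided that $$\frac{t^2}{4}\ge\log\Big(\frac{2M}{\gamma}\Big)\cdot\max_{1\le k\le r}\Big\{\Big(\frac{N_k-N_{k-1}}{m_k}-1\Big)\mu_{\mathbf{N},\mathbf{M}}(k,l)\Big\}$$ for all $l=1,\dots,r$ when $M=M_r$, and for all $l\in\{1,\dots,r-1,\infty\}$ when $M>M_r$. In addition, if $m_k=N_k-N_{k-1}$ for each $k$, then $\mathbb{P}(\|P_{\{i\}}U^*DUP_{\{i\}}\|\ge1+t)=0$ for all $i\in\mathbb{N}$.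
   Context: $N_0=M_0=0$. Multilevel Bernoulli scheme: $\Omega_k=\{j\in\{N_{k-1}+1,\dots,N_k\}:\delta_j=1\}$ with independent Bernoulli $\delta_j$, $\mathbb{P}(\delta_j=1)=q_k$. $P^a_b$ projects onto $\mathrm{span}\{e_{a+1},\dots,e_b\}$, $P_\Gamma$ onto $\mathrm{span}\{e_j:j\in\Gamma\}$, $P_K^\perp=I-P_K$. $\mu(A)=\sup|a_{ij}|^2$; $\mu_{\mathbf{N},\mathbf{M}}(k,l)=\sqrt{\mu(P^{N_{k-1}}_{N_k}UP^{M_{l-1}}_{M_l})\mu(P^{N_{k-1}}_{N_k}U)}$ and $\mu_{\mathbf{N},\mathbf{M}}(k,\infty)=\sqrt{\mu(P^{N_{k-1}}_{N_k}UP^\perp_{M_{r-1}})\mu(P^{N_{k-1}}_{N_k}U)}$. *)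

From mathcomp Require Import all_boot all_algebra.
From mathcomp Require Import complex.
From mathcomp Require Import classical_sets reals exp.
Unset Printing Implicit Defensive.
Import GRing.Theory Num.Theory.
Local Open Scope ring_scope.
Local Open Scope complex_scope.
Local Open Scope ring_scope.

(* Conventions: an operator U on l^2(N) is given by its matrix
   u i j = <e_i, U e_j> with indices i, j >= 1 (index 0 is never used).
   Levels are 1-based: level k (1 <= k <= r) of rows is {N_(k-1)+1,...,N_k}. *)


Definition cabs {R : realType} (z : R[i]) : R := complex.Re `|z|.

(* ||U|| <= 1, expressed on the matrix: for every finitely supported x,
   every finite truncation of ||U x||^2 is at most ||x||^2. *)
Definition contraction {R : realType} (u : nat -> nat -> R[i]) : Prop :=
  forall (n p : nat) (x : nat -> R[i]),
    \sum_(1 <= i < p.+1) cabs (\sum_(1 <= j < n.+1) u i j * x j) ^+ 2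
      <= \sum_(1 <= j < n.+1) cabs (x j) ^+ 2.

(* P^a_b A  (projection onto span{e_(a+1),...,e_b}) on the left *)
Definition Prows {R : realType} (a b : nat) (A : nat -> nat -> R[i]) : nat -> nat -> R[i] :=
  fun i j => if (a < i <= b)%N then A i j else 0.
Definition Pcols {R : realType} (a b : nat) (A : nat -> nat -> R[i]) : nat -> nat -> R[i] :=
  fun i j => if (a < j <= b)%N then A i j else 0.
(* A P^perp_a  (P^perp_a = I - P_a, P_a projection onto span{e_1..e_a}) *)
Definition Pcols_perp {R : realType} (a : nat) (A : nat -> nat -> R[i]) : nat -> nat -> R[i] :=
  fun i j => if (a < j)%N then A i j else 0.

Definition mu {R : realType} (A : nat -> nat -> R[i]) : R :=
  sup [set x : R | exists i j : nat, (0 < i)%N /\ (0 < j)%N /\ x = cabs (A i j) ^+ 2].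

Definition mu_NM {R : realType} (N M : nat -> nat) (u : nat -> nat -> R[i]) (k l : nat) : R :=
  Num.sqrt (mu (Pcols (M l.-1) (M l) (Prows (N k.-1) (N k) u))
            * mu (Prows (N k.-1) (N k) u)).

Definition mu_NM_inf {R : realType} (N M : nat -> nat) (r : nat) (u : nat -> nat -> R[i]) (k : nat) : R :=
  Num.sqrt (mu (Pcols_perp (M r.-1) (Prows (N k.-1) (N k) u))
            * mu (Prows (N k.-1) (N k) u)).

Definition qlev {R : realType} (N m : nat -> nat) (k : nat) : R := (m k)%:R / (N k - N k.-1)%:R.

(* Sample space: outcomes omega : {ffun 'I_(N r) -> bool}, where omega (j-1)
   is the value of delta_j, for 1 <= j <= N_r (only these delta_j matter). *)
Definition outcome (N : nat -> nat) (r : nat) := {ffun 'I_(N r) -> bool}.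

Definition delta (N : nat -> nat) (r : nat) (w : outcome N r) (j : nat) : bool :=
  (0 < j)%N && [exists i : 'I_(N r), (val i == j.-1) && w i].

Definition qidx {R : realType} (N m : nat -> nat) (r j : nat) : R :=
  \sum_(1 <= k < r.+1 | (N k.-1 < j <= N k)%N) @qlev R N m k.

Definition weight {R : realType} (N m : nat -> nat) (r : nat) (w : outcome N r) : R :=
  \prod_(i : 'I_(N r)) (if w i then @qidx R N m r i.+1 else 1 - @qidx R N m r i.+1).

Definition Prob {R : realType} (N m : nat -> nat) (r : nat) (E : pred (outcome N r)) : R :=
  \sum_(w | E w) @weight R N m r w.

Definition inOmega (N : nat -> nat) (r : nat) (w : outcome N r) (k j : nat) : bool :=
  (N k.-1 < j <= N k)%N && delta N r w j.

(* diagonal entry of D = sum_k q_k^-1 P_(Omega_k) at index j *)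
Definition Ddiag {R : realType} (N m : nat -> nat) (r : nat) (w : outcome N r) (j : nat) : R :=
  \sum_(1 <= k < r.+1) (if inOmega N r w k j then (@qlev R N m k)^-1 else 0).

(* || P_{i} U^* D U P_{i} || = | (U^* D U)_{ii} |
   (D vanishes outside {1..N_r}, so the sum over j is finite) *)
Definition UDU_ii {R : realType} (N m : nat -> nat) (r : nat) (u : nat -> nat -> R[i])
    (w : outcome N r) (i : nat) : R :=
  cabs (\sum_(1 <= j < (N r).+1) (u j i)^* * (@Ddiag R N m r w j)%:C * u j i).

From mathcomp Require Import all_boot all_order all_algebra.
From mathcomp Require Import complex.
From mathcomp Require Import reals sequences exp.
From mathcomp Require Import ring lra zify.
Import Order.TTheory GRing.Theory Num.Theory.
Local Open Scope complex_scope.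
Local Open Scope ring_scope.

(* For a fixed column i, |(U^* D U)_ii| = sum_j |u_ji|^2 delta_j / q_j is a sum of
   independent nonnegative variables whose mean sum_j |u_ji|^2 is at most 1 since
   ||U|| <= 1.  The elementary bound e^y <= 1 + y + y^2 (y <= 1/2) controls each
   Bernoulli moment generating function, and Markov's inequality with
   lambda = 2 L / t, L = log (2 M / gamma), bounds the probability of exceeding
   1 + t by e^-L = gamma / (2 M), as soon as L |u_ji|^2 (q_j^-1 - 1) <= t^2 / 4
   for all j.  That is what the coherence hypothesis provides, because
   |u_ji|^2 <= mu_NM(k, l) when j lies in row level k and i in column level l
   (l = infinity past M_(r-1)).  A union bound over i <= M concludes.  When every
   q_k = 1, only the full sample has positive probability, and there the sum is
   ||U e_i||^2 <= 1. *)

Lemma cabsR {R : realType} (x : R) : 0 <= x -> cabs x%:C = x.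
Proof. by move=> x_ge0; rewrite /cabs normc_def /= expr0n /= addr0 sqrtr_sqr ger0_norm. Qed.

Lemma cabs0 {R : realType} : cabs (0 : R[i]) = 0.
Proof. exact: cabsR. Qed.

Lemma conjC_scale_mul {R : realType} (z : R[i]) (c : R) :
  (z^* * c%:C * z)%C = (c * cabs z ^+ 2)%:C.
Proof.
rewrite /cabs normc_def /= sqr_sqrtr ?addr_ge0 ?sqr_ge0 //.
by case: z => a b; apply/eqP; rewrite eq_complex /=; apply/andP; split; apply/eqP; ring.
Qed.

Lemma expR_le_inv1B {R : realType} {y : R} : y < 1 -> expR y <= (1 - y)^-1.
Proof.
move=> y_lt1; have := expR_ge1Dx (- y); rewrite expRN => le_expRN.
by rewrite -[expR y]invrK lef_pV2 ?posrE ?invr_gt0 ?expR_gt0 ?subr_gt0.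
Qed.

Lemma expR_le_1DxDsqr {R : realType} (y : R) : y <= 1/2 -> expR y <= 1 + y + y ^+ 2.
Proof.
move=> y_le; have [y_ge0 | y_lt0] := lerP 0 y.
- (* e^y = (e^(y/4))^4 <= (1 - y/4)^-4, a rational bound that 1 + y + y^2 dominates on [0, 1/2] *)
  have -> : y = (y / 4) * 4%:R by field.
  rewrite expRM_natr.
  have pos : 0 < 1 - y / 4 by lra.
  apply: (le_trans (y := ((1 - y / 4)^-1) ^+ 4)).
    apply: lerXn2r; rewrite ?nnegrE ?expR_ge0 ?invr_ge0 ?(ltW pos) //.
    by apply: expR_le_inv1B; lra.
  rewrite exprVn -(ler_pM2r (exprn_gt0 4 pos)) mulVf ?gt_eqF ?exprn_gt0 //.
  have -> : y / 4 * 4%:R = y by field.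
  nra.
- have y_lt1 : y < 1 by lra.
  apply: le_trans (expR_le_inv1B y_lt1) _.
  have pos : 0 < 1 - y by lra.
  by rewrite -(ler_pM2r pos) mulVf ?gt_eqF //; nra.
Qed.

Lemma bernoulli_mgf_le {R : realType} (q a l : R) :
  0 < q <= 1 -> 0 <= a -> 0 <= l -> l * (a * (q^-1 - 1)) <= 1/2 ->
  q * expR (l * (a / q - a)) + (1 - q) * expR (- (l * a))
    <= expR (l ^+ 2 * (a ^+ 2 * (q^-1 - 1))).
Proof.
move=> /andP[q_gt0 q_le1] a_ge0 l_ge0 small.
apply: le_trans (expR_ge1Dx _).
have e1 := expR_le_1DxDsqr (l * (a / q - a)).
have e0 := expR_le_1DxDsqr (- (l * a)).
apply: (le_trans (y := q * (1 + l * (a / q - a) + (l * (a / q - a)) ^+ 2)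
                       + (1 - q) * (1 + - (l * a) + (- (l * a)) ^+ 2))).
  apply: lerD; apply: ler_wpM2l; rewrite ?subr_ge0 //; first exact: ltW.
    by apply: e1; rewrite mulrBr mulr1 in small.
  by apply: e0; nra.
by rewrite le_eqVlt; apply/orP; left; apply/eqP; field; rewrite gt_eqF.
Qed.

Section SampledSums.
Context {R : realType} {N m : nat -> nat} {r : nat}.
Local Notation q := (@qidx R N m r).
Local Notation weight := (@weight R N m r).
Local Notation Prob := (@Prob R N m r).

Definition sampled_sum (a : nat -> R) (w : outcome N r) : R :=
  \sum_(j < N r) a j.+1 * (if w j then (q j.+1)^-1 else 0).

Lemma sampled_sum_full (a : nat -> R) (c : R) :
  (forall j, (0 < j <= N r)%N -> q j = 1) -> \sum_(j < N r) a j.+1 < c ->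
  Prob (fun w => c <= sampled_sum a w) = 0.
Proof.
move=> q_eq1 sum_lt; rewrite /Prob big1 // => w tail.
have [all_w | /forallPn[j not_wj]] := boolP [forall j, w j].
  suff full : sampled_sum a w = \sum_(j < N r) a j.+1.
    by move: tail; rewrite full leNgt sum_lt.
  by apply: eq_bigr => j _; rewrite (forallP all_w) q_eq1 ?ltn_ord // invr1 mulr1.
by rewrite /weight (bigD1 j) //= (negbTE not_wj) q_eq1 ?ltn_ord // subrr mul0r.
Qed.

Hypothesis q_range : forall j, (0 < j <= N r)%N -> 0 < q j <= 1.

Lemma weight_ge0 w : 0 <= weight w.
Proof.
apply: prodr_ge0 => j _; have /andP[q_gt0 q_le1] := q_range j.+1 (ltn_ord j).
by case: (w j); rewrite ?subr_ge0 // ltW.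
Qed.

Lemma Prob_bigmax_le (s : seq nat) (P : pred nat) (X : nat -> outcome N r -> R) (c : R) :
  0 < c ->
  Prob (fun w => c <= \big[Num.max/0]_(i <- s | P i) X i w)
    <= \sum_(i <- s) Prob (fun w => c <= X i w).
Proof.
move=> c_gt0; rewrite /Prob big_mkcond /=.
under [X in _ <= X]eq_bigr do rewrite big_mkcond /=.
rewrite exchange_big /=; apply: ler_sum => w _.
have sum_ge0 s' : 0 <= \sum_(i <- s') (if c <= X i w then weight w else 0).
  by apply: sumr_ge0 => i _; case: ifP => // _; exact: weight_ge0.
case: ifP => // max_ge.
have [i i_s /andP[_ Xi_ge]] : exists2 i, i \in s & P i && (c <= X i w).
  apply/hasP; apply: contraLR max_ge => /hasPn noX; rewrite -ltNge.
  rewrite big_seq_cond; apply: bigmax_lt => // i /andP[i_s Pi].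
  by have := noX i i_s; rewrite Pi /= -ltNge.
by rewrite (big_rem i) //= Xi_ge lerDl.
Qed.

(* Markov's inequality for [expR (lam * (sampled_sum a - \sum a))], whose
   expectation factors over the independent samples. *)
Lemma sampled_sum_chernoff (a : nat -> R) (t lam : R) :
  (forall j, 0 <= a j) -> \sum_(j < N r) a j.+1 <= 1 -> 0 <= lam ->
  (forall j, (0 < j <= N r)%N -> lam * (a j * ((q j)^-1 - 1)) <= 1/2) ->
  Prob (fun w => 1 + t <= sampled_sum a w) <=
  expR (- (lam * t) + lam ^+ 2 * \sum_(j < N r) a j.+1 ^+ 2 * ((q j.+1)^-1 - 1)).
Proof.
move=> a_ge0 sum_a_le1 lam_ge0 small.
pose W (j : 'I_(N r)) (b : bool) := if b then q j.+1 else 1 - q j.+1.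
pose g (j : 'I_(N r)) (b : bool) :=
  expR (lam * (a j.+1 * (if b then (q j.+1)^-1 else 0) - a j.+1)).
have markov w : (if 1 + t <= sampled_sum a w then weight w else 0)
    <= expR (- (lam * t)) * \prod_j (W j (w j) * g j (w j)).
  rewrite big_split /= -/(weight w) mulrCA.
  have g_ge0 : 0 <= \prod_j g j (w j) by apply: prodr_ge0 => j _; exact: expR_ge0.
  case: ifP => [tail | _]; last by rewrite mulr_ge0 ?weight_ge0 // mulr_ge0 ?expR_ge0.
  rewrite -[X in X <= _]mulr1 ler_wpM2l ?weight_ge0 //.
  rewrite -expR_sum -expRD -expR0 ler_expR -mulr_sumr sumrB -/(sampled_sum a w).
  nra.
rewrite /Prob big_mkcond /=; apply: le_trans (ler_sum _ (fun w _ => markov w)) _.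
rewrite -mulr_sumr -(bigA_distr_bigA (fun j b => W j b * g j b)) /=.
rewrite expRD ler_wpM2l ?expR_ge0 // mulr_sumr expR_sum.
apply: ler_prod => j _; rewrite big_bool /= /W /g mulr0 sub0r mulrN.
have q_j := q_range j.+1 (ltn_ord j); have /andP[q_gt0 q_le1] := q_j.
apply/andP; split.
  by rewrite addr_ge0 // mulr_ge0 ?expR_ge0 ?subr_ge0 // ltW.
by apply: bernoulli_mgf_le => //; apply: small; rewrite /= ltn_ord.
Qed.

Lemma sampled_sum_tail (a : nat -> R) (t L B : R) :
  (forall j, 0 <= a j) -> \sum_(j < N r) a j.+1 <= 1 ->
  0 < t <= 1 -> 0 < L -> 0 <= B -> L * B <= t ^+ 2 / 4 ->
  (forall j, (0 < j <= N r)%N -> a j * ((q j)^-1 - 1) <= B) ->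
  Prob (fun w => 1 + t <= sampled_sum a w) <= expR (- L).
Proof.
move=> a_ge0 sum_a_le1 /andP[t_gt0 t_le1] L_gt0 B_ge0 LB_le a_le.
have lam_ge0 : 0 <= 2 * L / t by rewrite divr_ge0 // ltW // mulr_gt0.
apply: (le_trans (@sampled_sum_chernoff a t (2 * L / t) a_ge0 sum_a_le1 lam_ge0 _)).
  move=> j j_range; apply: le_trans (_ : 2 * L / t * B <= _).
    by apply: ler_wpM2l => //; apply: a_le.
  have -> : 2 * L / t * B = 2 * (L * B) / t by field; rewrite gt_eqF.
  by rewrite ler_pdivrMr //; nra.
have var_le : \sum_(j < N r) a j.+1 ^+ 2 * ((q j.+1)^-1 - 1) <= B.
  apply: le_trans (_ : \sum_(j < N r) a j.+1 * B <= _).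
    by apply: ler_sum => j _; rewrite expr2 -mulrA ler_wpM2l // a_le /= ?ltn_ord.
  by rewrite -mulr_suml -[X in _ <= X]mul1r ler_wpM2r.
rewrite ler_expR.
have -> : 2 * L / t * t = 2 * L by field; rewrite gt_eqF.
have : (2 * L / t) ^+ 2 * B <= L.
  have -> : (2 * L / t) ^+ 2 * B = 4 * L * (L * B) / t ^+ 2 by field; rewrite gt_eqF.
  by rewrite ler_pdivrMr ?exprn_gt0 //; nra.
have := ler_wpM2l (sqr_ge0 (2 * L / t)) var_le.
lra.
Qed.

End SampledSums.

Arguments sampled_sum {R} N m r a w.

Definition entries_le1 {R : realType} (A : nat -> nat -> R[i]) : Prop :=
  forall i j, (0 < i)%N -> (0 < j)%N -> cabs (A i j) ^+ 2 <= 1.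

Lemma mu_ge {R : realType} (A : nat -> nat -> R[i]) i j :
  entries_le1 A -> (0 < i)%N -> (0 < j)%N -> cabs (A i j) ^+ 2 <= mu A.
Proof.
move=> A_le1 i_gt0 j_gt0; apply: ub_le_sup; last by exists i, j.
by exists 1 => _ [i' [j' [i'_gt0 [j'_gt0 ->]]]]; exact: A_le1.
Qed.

Lemma entries_le1_mask {R : realType} (c : nat -> nat -> bool) {A : nat -> nat -> R[i]} :
  entries_le1 A -> entries_le1 (fun i j => if c i j then A i j else 0).
Proof.
move=> A_le1 i j i_gt0 j_gt0; case: ifP => _; first exact: A_le1.
by rewrite cabs0 expr0n ler01.
Qed.

Lemma le_sqrt_mul {R : rcfType} (x a b : R) :
  0 <= x -> x <= a -> x <= b -> x <= Num.sqrt (a * b).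
Proof.
move=> x_ge0 x_le_a x_le_b.
by rewrite -[x]ger0_norm // -sqrtr_sqr ler_wsqrtr // expr2 ler_pM.
Qed.

Section Coherence.
Context {R : realType} {u : nat -> nat -> R[i]}.
Hypothesis u_contr : contraction u.

Lemma contraction_col_norm i p :
  (0 < i)%N -> \sum_(1 <= j < p.+1) cabs (u j i) ^+ 2 <= 1.
Proof.
move=> i_gt0; have := u_contr i p (fun j => if j == i then 1 else 0).
have unit_sum (V : nmodType) (F : nat -> V) :
    \sum_(1 <= j < i.+1) (if j == i then F j else 0) = F i.
  rewrite big_nat_recr //= eqxx big1_seq ?add0r // => j /andP[_].
  by rewrite mem_index_iota => /andP[_ j_lt]; rewrite ifN // ltn_eqF.
under eq_bigr => j _ do under eq_bigr => k _ do
  rewrite (fun_if (fun x => u j k * x)) mulr1 mulr0.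
under [X in _ <= X]eq_bigr => j _ do rewrite (fun_if (fun x => cabs x ^+ 2)) cabs0 expr0n.
rewrite unit_sum (@cabsR R 1 ler01) expr1n.
by under eq_bigr => j _ do rewrite unit_sum.
Qed.

Lemma contraction_entries_le1 : entries_le1 u.
Proof.
move=> j i j_gt0 i_gt0; apply: le_trans (contraction_col_norm i j i_gt0).
by rewrite big_nat_recr //= lerDr sumr_ge0 // => k _; exact: sqr_ge0.
Qed.

Lemma sqr_entry_le_row_coherence (c : nat -> bool) (N : nat -> nat) k j i :
  (N k.-1 < j <= N k)%N -> (0 < i)%N -> c i ->
  cabs (u j i) ^+ 2 <=
    Num.sqrt (mu (fun j' i' => if c i' then Prows (N k.-1) (N k) u j' i' else 0)
              * mu (Prows (N k.-1) (N k) u)).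
Proof.
move=> j_in i_gt0 c_i; have rows_le1 := entries_le1_mask (fun j _ => N k.-1 < j <= N k)%N
  contraction_entries_le1.
have j_gt0 : (0 < j)%N by lia.
apply: le_sqrt_mul; first exact: sqr_ge0.
- have := @mu_ge _ _ j i (entries_le1_mask (fun _ i => c i) rows_le1).
  by rewrite /Prows /= j_in c_i; apply.
- by have := @mu_ge _ _ j i rows_le1; rewrite /Prows /= j_in; apply.
Qed.

Lemma sqr_entry_le_mu_NM (N M : nat -> nat) k l j i :
  (N k.-1 < j <= N k)%N -> (M l.-1 < i <= M l)%N ->
  cabs (u j i) ^+ 2 <= mu_NM N M u k l.
Proof.
by move=> j_in i_in; apply: (sqr_entry_le_row_coherence (fun i => M l.-1 < i <= M l)%N); lia.
Qed.

Lemma sqr_entry_le_mu_NM_inf (N M : nat -> nat) r k j i :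
  (N k.-1 < j <= N k)%N -> (M r.-1 < i)%N ->
  cabs (u j i) ^+ 2 <= mu_NM_inf N M r u k.
Proof.
by move=> j_in i_in; apply: (sqr_entry_le_row_coherence (fun i => M r.-1 < i)%N); lia.
Qed.

End Coherence.

Lemma delta_ord (N : nat -> nat) r (w : outcome N r) (j : 'I_(N r)) :
  delta N r w j.+1 = w j.
Proof.
apply/existsP/idP => [[j' /andP[/eqP eq_j w_j']] | w_j]; last by exists j; rewrite eqxx.
by have -> : j = j' by apply: val_inj.
Qed.

Section MultilevelScheme.
Context {R : realType} {N m : nat -> nat} {r : nat}.
Hypothesis N0 : N 0%N = 0%N.

Lemma level_exists {j} : (0 < j <= N r)%N ->
  exists2 k, (1 <= k <= r)%N & (N k.-1 < j <= N k)%N.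
Proof.
move=> /andP[j_gt0]; elim: r => [|r' IH] j_le; first by rewrite N0 in j_le; lia.
have [/IH[k k_range j_in] | j_gt] := leqP j (N r'); first by exists k => //; lia.
by exists r'.+1 => /=; lia.
Qed.

Hypothesis N_nondecr : forall k, (k < r)%N -> (N k <= N k.+1)%N.

Lemma homo_bounds a b : (a <= b <= r)%N -> (N a <= N b)%N.
Proof.
move=> /andP[le_ab le_br].
apply: (@homo_leq_in _ [pred k | k <= r]%N N leq leqnn leq_trans) => //=.
- by move=> x y _ y_le k /andP[_ k_lt]; apply: ltnW (leq_trans k_lt y_le).
- by move=> k _; exact: N_nondecr.
- exact: leq_trans le_br.
Qed.

Lemma level_unique {j k k'} : (1 <= k <= r)%N -> (1 <= k' <= r)%N ->
  (N k.-1 < j <= N k)%N -> (N k'.-1 < j <= N k')%N -> k = k'.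
Proof.
move=> k_range k'_range j_in j_in'.
have [lt_kk' | lt_k'k | //] := ltngtP k k'.
- by have := @homo_bounds k k'.-1; lia.
- by have := @homo_bounds k' k.-1; lia.
Qed.

Lemma big_level {V : nmodType} (F : nat -> V) {j k} :
  (1 <= k <= r)%N -> (N k.-1 < j <= N k)%N ->
  \sum_(1 <= k' < r.+1 | (N k'.-1 < j <= N k')%N) F k' = F k.
Proof.
move=> k_range j_in.
rewrite big_mkcond (bigD1_seq k) ?mem_index_iota ?iota_uniq //=.
rewrite j_in big1_seq ?addr0 // => k' /andP[/eqP ne_k'k].
rewrite mem_index_iota => k'_range; case: ifP => // j_in'; elim: ne_k'k.
by apply: (@level_unique j k' k) => //; lia.
Qed.

Local Notation q := (@qidx R N m r).
Local Notation qlev := (@qlev R N m).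

Lemma qidx_level {j k} : (1 <= k <= r)%N -> (N k.-1 < j <= N k)%N -> q j = qlev k.
Proof. exact: big_level. Qed.

Lemma Ddiag_ord (w : outcome N r) (j : 'I_(N r)) :
  Ddiag N m r w j.+1 = if w j then (q j.+1)^-1 else 0.
Proof.
have [k k_range j_in] := @level_exists j.+1 (ltn_ord j).
rewrite (qidx_level k_range j_in) /Ddiag /inOmega delta_ord.
case: (w j); last by rewrite big1 // => k' _; rewrite andbF.
by under eq_bigr do rewrite andbT; rewrite -big_mkcond (big_level _ k_range j_in).
Qed.

Lemma UDU_ii_sampled_sum (u : nat -> nat -> R[i]) w i :
  UDU_ii N m r u w i = sampled_sum N m r (fun j => cabs (u j i) ^+ 2) w.
Proof.
rewrite /UDU_ii; under eq_bigr do rewrite conjC_scale_mul.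
rewrite -raddf_sum cabsR; last first.
  apply: sumr_ge0 => j _; rewrite mulr_ge0 ?sqr_ge0 // /Ddiag sumr_ge0 // => k _.
  by case: ifP => // _; rewrite invr_ge0 /qlev divr_ge0.
rewrite big_add1 /= big_mkord; apply: eq_bigr => j _.
by rewrite Ddiag_ord mulrC.
Qed.

Hypothesis m_range : forall k, (1 <= k <= r)%N -> (0 < m k <= N k - N k.-1)%N.

Lemma qlev_range {k} : (1 <= k <= r)%N -> 0 < qlev k <= 1.
Proof.
move=> /m_range /andP[m_gt0 m_le]; have len_gt0 : (0 < N k - N k.-1)%N by lia.
by rewrite divr_gt0 ?ltr0n //= ler_pdivrMr ?ltr0n // mul1r ler_nat.
Qed.

Lemma qidx_range j : (0 < j <= N r)%N -> 0 < q j <= 1.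
Proof. by move=> /level_exists[k k_range j_in]; rewrite (qidx_level k_range j_in) qlev_range. Qed.

Lemma weighted_excess_le_bigmax (a mu_l : nat -> R) j :
  (forall k j, (1 <= k <= r)%N -> (N k.-1 < j <= N k)%N -> a j <= mu_l k) ->
  0 <= a j -> (0 < j <= N r)%N ->
  a j * ((q j)^-1 - 1) <=
    \big[Num.max/0]_(1 <= k < r.+1) (((N k - N k.-1)%:R / (m k)%:R - 1) * mu_l k).
Proof.
move=> a_le a_ge0 /level_exists[k k_range j_in].
rewrite (qidx_level k_range j_in).
apply: (bigmax_sup_seq _ k) => //; first by rewrite mem_index_iota; lia.
have /andP[q_gt0 q_le1] := qlev_range k_range.
have excess_ge0 : 0 <= (qlev k)^-1 - 1 by rewrite subr_ge0 invf_ge1.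
rewrite /qlev invf_div in excess_ge0 *.
by rewrite mulrC ler_wpM2l // a_le.
Qed.

Lemma Prob_UDU_ii_tail {u : nat -> nat -> R[i]} {mu_l : nat -> R} {i t L} :
  contraction u -> (0 < i)%N -> 0 < t <= 1 -> 0 < L ->
  L * \big[Num.max/0]_(1 <= k < r.+1) (((N k - N k.-1)%:R / (m k)%:R - 1) * mu_l k)
    <= t ^+ 2 / 4 ->
  (forall k j, (1 <= k <= r)%N -> (N k.-1 < j <= N k)%N -> cabs (u j i) ^+ 2 <= mu_l k) ->
  @Prob R N m r (fun w => 1 + t <= UDU_ii N m r u w i) <= expR (- L).
Proof.
move=> u_contr i_gt0 t_range L_gt0 bound_le entry_le.
rewrite /Prob; under eq_bigl => w do rewrite UDU_ii_sampled_sum.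
apply: (sampled_sum_tail qidx_range _ t L _ _ _ t_range L_gt0 _ bound_le).
- by move=> j; exact: sqr_ge0.
- by have := contraction_col_norm u_contr i (N r) i_gt0; rewrite big_add1 /= big_mkord.
- exact: bigmax_ge_id.
- move=> j j_range.
  by apply: (weighted_excess_le_bigmax (fun j => cabs (u j i) ^+ 2)); rewrite ?sqr_ge0.
Qed.

Lemma Prob_UDU_ii_full (u : nat -> nat -> R[i]) i t :
  (forall k, (1 <= k <= r)%N -> m k = (N k - N k.-1)%N) ->
  contraction u -> (0 < i)%N -> 0 < t ->
  @Prob R N m r (fun w => 1 + t <= UDU_ii N m r u w i) = 0.
Proof.
move=> m_full u_contr i_gt0 t_gt0.
rewrite /Prob; under eq_bigl => w do rewrite UDU_ii_sampled_sum.
apply: sampled_sum_full.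
  move=> j /level_exists[k k_range j_in].
  rewrite (qidx_level k_range j_in) /qlev m_full // divff // pnatr_eq0 -lt0n.
  by have := m_range k k_range; lia.
have := contraction_col_norm u_contr i (N r) i_gt0; rewrite big_add1 /= big_mkord.
lra.
Qed.

End MultilevelScheme.

Lemma column_level_cases {M : nat -> nat} {r Mb i} :
  M 0%N = 0%N -> (forall k, (k < r)%N -> (M k <= M k.+1)%N) ->
  (M r <= Mb)%N -> (0 < i <= Mb)%N ->
  (exists2 l, ((Mb == M r) && (1 <= l <= r)) || ((M r < Mb) && (1 <= l < r))
            & (M l.-1 < i <= M l))%N
  \/ (M r < Mb /\ M r.-1 < i)%N.
Proof.
move=> M0 M_nondecr M_le /andP[i_gt0 i_le].
have M_last := @homo_bounds M r M_nondecr r.-1 r.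
have [i_le_Mr | Mr_lt_i] := leqP i (M r); last by right; lia.
have i_range : (0 < i <= M r)%N by rewrite i_gt0.
have [l l_range i_in] := @level_exists M r M0 i i_range.
have [/andP[/eqP Mb_ne r_le] | inner_level] := boolP ((Mb != M r) && (r <= l))%N.
  have l_eq : l = r by lia.
  by rewrite l_eq in i_in; right; lia.
by left; exists l => //; lia.
Qed.

Theorem proposition7p13 (R : realType) (u : nat -> nat -> R[i])
    (r : nat) (N M m s : nat -> nat) (Delta : nat -> seq nat) (Mb : nat) :
  contraction u ->
  (0 < r)%N -> N 0%N = 0%N -> M 0%N = 0%N ->
  (1 <= N 1)%N ->
  (forall k, (1 <= k < r)%N -> (N k < N k.+1)%N) ->
  (forall k, (1 <= k < r)%N -> (M k < M k.+1)%N) ->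
  (forall k, (1 <= k <= r)%N -> (0 < m k <= N k - N k.-1)%N) ->
  (forall k, (1 <= k <= r)%N ->
     [/\ uniq (Delta k), size (Delta k) = s k
       & all (fun j => (M k.-1 < j <= M k)%N) (Delta k)]) ->
  (M r <= Mb)%N ->
  forall t gamma : R, 0 < t < 1 -> 0 < gamma < 1 ->
  let inDelta j := has (fun k => j \in Delta k) (iota 1 r) in
  let bound (mu_l : nat -> R) :=
    ln (2 * Mb%:R / gamma)
    * \big[Num.max/0]_(1 <= k < r.+1)
        (((N k - N k.-1)%:R / (m k)%:R - 1) * mu_l k) in
  ((forall l, ((Mb == M r) && (1 <= l <= r))%N || ((M r < Mb) && (1 <= l < r))%N ->
      bound (fun k => mu_NM N M u k l) <= t ^+ 2 / 4) ->
   ((M r < Mb)%N -> bound (fun k => mu_NM_inf N M r u k) <= t ^+ 2 / 4) ->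
   @Prob R N m r (fun w => 1 + t <=
        \big[Num.max/0]_(1 <= i < Mb.+1 | ~~ inDelta i) UDU_ii N m r u w i)
     <= gamma)
  /\
  ((forall k, (1 <= k <= r)%N -> m k = (N k - N k.-1)%N) ->
   forall i, (0 < i)%N -> @Prob R N m r (fun w => 1 + t <= UDU_ii N m r u w i) = 0).
Proof.
move=> u_contr _ N0 M0 _ N_incr M_incr m_range _ M_le t gamma
  /andP[t_gt0 t_lt1] /andP[g_gt0 g_lt1] inDelta bound.
have nondecr (B : nat -> nat) : B 0%N = 0%N ->
    (forall k, (1 <= k < r)%N -> (B k < B k.+1)%N) -> forall k, (k < r)%N -> (B k <= B k.+1)%N.
  by move=> B0 B_incr [|k] k_lt; [rewrite B0 | apply/ltnW/B_incr; lia].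
have N_nondecr := nondecr N N0 N_incr; have M_nondecr := nondecr M M0 M_incr.
split=> [coh_l coh_inf | m_full i i_gt0]; last exact: Prob_UDU_ii_full.
have column_tail i : (0 < i <= Mb)%N ->
    @Prob R N m r (fun w => 1 + t <= UDU_ii N m r u w i) <= gamma / (2 * Mb%:R).
  move=> /[dup] i_range /andP[i_gt0 i_le]; have Mb_ge1 : 1 <= Mb%:R :> R by rewrite ler1n; lia.
  have ratio_gt1 : 1 < 2 * Mb%:R / gamma by rewrite ltr_pdivlMr // mul1r; lra.
  have -> : gamma / (2 * Mb%:R) = expR (- ln (2 * Mb%:R / gamma)).
    by rewrite expRN lnK ?invf_div // posrE (lt_trans ltr01 ratio_gt1).
  have t_range : 0 < t <= 1 by rewrite t_gt0 ltW.
  have tail := Prob_UDU_ii_tail N0 N_nondecr m_range u_contr i_gt0 t_range (ln_gt0 ratio_gt1).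
  have [[l l_ok i_in] | [Mr_lt i_in]] := column_level_cases M0 M_nondecr M_le i_range.
  - by apply: tail (coh_l l l_ok) _ => k j _ j_in; exact: sqr_entry_le_mu_NM.
  - by apply: tail (coh_inf Mr_lt) _ => k j _ j_in; exact: sqr_entry_le_mu_NM_inf.
have q_range := qidx_range (R := R) N0 N_nondecr m_range.
apply: (le_trans (Prob_bigmax_le q_range _ _ _ _ _)); first by rewrite ltr_wpDr // ltW.
apply: le_trans (_ : \sum_(1 <= i < Mb.+1) gamma / (2 * Mb%:R) <= _).
  by rewrite !big_seq; apply: ler_sum => i; rewrite mem_index_iota => i_range; apply: column_tail.
rewrite sumr_const_nat subn1 /=.
have [-> | Mb_gt0] := posnP Mb; first by rewrite mulr0n ltW.
have -> : gamma / (2 * Mb%:R) *+ Mb = gamma / 2.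
  by rewrite -mulr_natr; field; rewrite pnatr_eq0 -lt0n.
lra.
Qed.
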